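(* Let $\mathsf{T}$ be a rooted plane tree. The ornamentation lattice $\mathcal{O}(\mathsf{T})$ is semidistributive.
   Context: A rooted plane tree $\mathsf{T}$ is a finite tree with a distinguished root, regarded as a poset in which $v'\leq v$ iff $v$ lies on the path from $v'$ to the root. An ornament is a nonempty set of nodes inducing a connected subgraph; an ornamentation is a map $\delta$ from nodes to ornaments such that the unique maximal element of $\delta(v)$ is $v$ and any two sets $\delta(v),\delta(v')$ are nested or disjoint. $\mathcal{O}(\mathsf{T})$ is the set of ornamentations ordered by $\delta\leq\delta'$ iff $\delta(v)\subseteq\delta'(v)$ for all $v$ (a lattice). A finite lattice $L$ is semidistributive if for all $a\leq b$ in $L$, the set $\{z\in L:z\wedge b=a\}$ has a maximum element and the set $\{z\in L:z\vee a=b\}$ has a minimum element. *)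

From mathcomp Require Import all_boot.
Set Implicit Arguments. Unset Strict Implicit. Unset Printing Implicit Defensive.

Section Tree.
Variables (V : finType) (root : V) (par : V -> V).

(* A rooted tree on the finite node set V: par is the parent map, the root is
   its own "parent", and every node reaches the root by iterating par. *)
Definition rooted_tree : Prop := par root = root /\ forall v, fconnect par v root.

Definition tle (u v : V) : bool := fconnect par u v.

Definition tadj (u v : V) : bool := (u != v) && ((par u == v) || (par v == u)).

Definition induced_connected (A : {set V}) : Prop :=
  forall x y, x \in A -> y \in A ->
    connect (fun a b => [&& a \in A, b \in A & tadj a b]) x y.

Definition ornament (A : {set V}) : Prop := A != set0 /\ induced_connected A.

Definition tmaximal (A : {set V}) (x : V) : Prop :=
  x \in A /\ forall y, y \in A -> tle x y -> y = x.

Definition ornamentation (d : V -> {set V}) : Prop :=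
  (forall v, ornament (d v)) /\
  (forall v x, tmaximal (d v) x <-> x = v) /\
  (forall v v', d v \subset d v' \/ d v' \subset d v \/ [disjoint d v & d v']).

Definition ole (d d' : V -> {set V}) : Prop := forall v, d v \subset d' v.

Definition is_meet (x y m : V -> {set V}) : Prop :=
  ornamentation m /\ ole m x /\ ole m y /\
  forall w, ornamentation w -> ole w x -> ole w y -> ole w m.

Definition is_join (x y j : V -> {set V}) : Prop :=
  ornamentation j /\ ole x j /\ ole y j /\
  forall w, ornamentation w -> ole x w -> ole y w -> ole j w.

Definition orn_lattice : Prop :=
  forall x y, ornamentation x -> ornamentation y ->
    (exists m, is_meet x y m) /\ (exists j, is_join x y j).

(* semidistributivity, with  z /\ b = a  read as "a is the meet of z and b" *)
Definition orn_semidistributive : Prop :=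
  forall a b, ornamentation a -> ornamentation b -> ole a b ->
    (exists zm, ornamentation zm /\ is_meet zm b a /\
       forall z, ornamentation z -> is_meet z b a -> ole z zm) /\
    (exists zm, ornamentation zm /\ is_join zm a b /\
       forall z, ornamentation z -> is_join z a b -> ole zm z).

End Tree.

From mathcomp Require Import all_boot zify.
From Stdlib Require Import Classical.
Set Implicit Arguments. Unset Strict Implicit. Unset Printing Implicit Defensive.

(* An ornament with top v is exactly a set containing v, lying below v and
   closed under taking parents strictly below v; for such sets the
   nested-or-disjoint condition says that "u \in d v" is a transitive relation.
   Meets in O(T) are therefore pointwise intersections and joins are transitive
   closures of unions.  If z1 /\ b = z2 /\ b = a, membership in a(v) propagates
   down any chain of the closure of z1 \/ z2 that stays in b(v), so
   (z1 \/ z2) /\ b = a; if z1 \/ a = z2 \/ a = b, induction on the size of the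
   tree interval [u, v] gives (z1 /\ z2) \/ a = b.  A nonempty family of a
   finite lattice closed under joins (meets) has a greatest (least) element. *)

Lemma connect_sub_preorder (T : finType) (e R : rel T) :
  reflexive R -> transitive R -> subrel e R -> subrel (connect e) R.
Proof.
move=> Rrefl Rtrans eR x _ /connectP [p + ->].
elim: p x => [|y p IH] x /=; first by rewrite Rrefl.
by case/andP=> /eR Rxy /IH; apply: Rtrans.
Qed.

Lemma connect_exit (T : finType) (e : rel T) (P : pred T) x y :
  connect e x y -> P x -> ~~ P y -> exists a b, [/\ P a, ~~ P b & e a b].
Proof.
move=> /connectP [p + ->]; elim: p x => [|z p IH] x /=; first by move=> _ Px; rewrite Px.
case/andP=> exz pz Px Nlast; have [Pz|NPz] := boolP (P z); first exact: IH pz Pz Nlast.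
by exists x, z.
Qed.

Lemma connect_neq_step (T : finType) (e : rel T) u v :
  connect e u v -> u != v -> exists t, [/\ t != u, e u t & connect e t v].
Proof.
move=> /connectP [p pe ->{v}]; case/shortenP: pe => [[|t q]] /= pe uq _.
  by rewrite eqxx.
case/andP: pe => eut pe _; exists t; split=> //.
  by apply: contraTneq uq => ->; rewrite /= inE eqxx.
by apply/connectP; exists q.
Qed.

Lemma connect_cases (T : finType) (e : rel T) u v : connect e u v ->
  [\/ u = v, e u v | exists s, [/\ s != u, s != v, connect e u s & connect e s v]].
Proof.
move=> uv; have [->|Nuv] := eqVneq u v; first by constructor 1.
have [t [Ntu eut tv]] := connect_neq_step uv Nuv.
have [tv_eq|Ntv] := eqVneq t v; first by constructor 2; rewrite -tv_eq.
by constructor 3; exists t; split=> //; apply: connect1.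
Qed.

Lemma ex_argmin (T : Type) (P : T -> Prop) (f : T -> nat) :
  (exists x, P x) -> exists2 x, P x & forall y, P y -> f x <= f y.
Proof.
case=> x Px; have [n] := ubnP (f x); elim: n x Px => // n IH x Px fx_lt.
have [[y Py fy_lt]|fx_min] := classic (exists2 y, P y & f y < f x).
  exact: IH y Py (leq_trans fy_lt fx_lt).
by exists x => // y Py; rewrite leqNgt; apply/negP => fy_lt; apply: fx_min; exists y.
Qed.

Lemma ex_argmax (T : Type) (P : T -> Prop) (f : T -> nat) N :
  (forall x, P x -> f x <= N) -> (exists x, P x) ->
  exists2 x, P x & forall y, P y -> f y <= f x.
Proof.
move=> fN /(ex_argmin (fun x => N - f x)) [x Px xmin].
by exists x => // y Py; move: (xmin y Py) (fN x Px) (fN y Py); lia.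
Qed.

Section ExtremalFamilies.
Variable V : finType.
Local Notation family := (V -> {set V}).
Implicit Types x y z : family.

Definition msize z := \sum_v #|z v|.

Lemma msize_le x y : ole x y -> msize x <= msize y.
Proof. by move=> xy; apply: leq_sum => v _; apply: subset_leq_card. Qed.

Lemma ole_msize_anti x y : ole x y -> msize y <= msize x -> ole y x.
Proof.
move=> xy yx v; have := leqif_sum (fun v (_ : true) => subset_leqif_card (xy v)).
by case=> _ /esym; rewrite eqn_leq msize_le //= yx => /forallP /(_ v).
Qed.

Lemma ex_greatest_closed (P : family -> Prop) (op : family -> family -> family) :
  (forall x y, ole x (op x y)) -> (forall x y, ole y (op x y)) ->
  (forall x y, P x -> P y -> P (op x y)) -> (exists x, P x) ->
  exists2 z, P z & forall y, P y -> ole y z.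
Proof.
move=> opl opr opP /(@ex_argmax _ _ msize (msize (fun=> setT))) [|z Pz zmax].
  by move=> x _; apply: msize_le => v; apply: subsetT.
exists z => // y Py v; have := ole_msize_anti (opl z y) (zmax _ (opP _ _ Pz Py)).
by move/(_ v); apply: subset_trans (opr z y v).
Qed.

Lemma ex_least_closed (P : family -> Prop) (op : family -> family -> family) :
  (forall x y, ole (op x y) x) -> (forall x y, ole (op x y) y) ->
  (forall x y, P x -> P y -> P (op x y)) -> (exists x, P x) ->
  exists2 z, P z & forall y, P y -> ole z y.
Proof.
move=> opl opr opP /(ex_argmin msize) [z Pz zmin].
exists z => // y Py v; have := ole_msize_anti (opl z y) (zmin _ (opP _ _ Pz Py)).
by move/(_ v)/subset_trans; apply; apply: opr.
Qed.

End ExtremalFamilies.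

Section Ornamentations.
Variables (V : finType) (root : V) (par : V -> V).
Hypothesis tree : rooted_tree root par.

Notation tle := (tle par).

Lemma tle_refl : reflexive tle.
Proof. exact: connect0. Qed.

Lemma tle_trans : transitive tle.
Proof. exact: connect_trans. Qed.

Lemma tle_par u : tle u (par u).
Proof. exact: fconnect1. Qed.

Lemma tle_iter n u : tle u (iter n par u).
Proof. exact: fconnect_iter. Qed.

Lemma tleP u v : tle u v -> exists n, iter n par u = v.
Proof. by move=> uv; exists (findex par u v); apply: iter_findex. Qed.

Lemma tle_anti u v : tle u v -> tle v u -> u = v.
Proof.
case: tree => par_root to_root /tleP [[|n] // uv] /tleP [m vu].
have periodic k : iter (k * (n.+1 + m)) par u = u.
  by elim: k => // k IH; rewrite mulSn iterD IH addnC iterD uv.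
have [k u_root] := tleP (to_root u).
have : iter (k * (n.+1 + m)) par u = root.
  by rewrite -(subnK (leq_pmulr k (ltn0Sn _))) iterD u_root iter_fix.
by rewrite periodic => u_eq; rewrite -uv u_eq iter_fix.
Qed.

Lemma tle_parl u v : tle u v -> u = v \/ tle (par u) v.
Proof. by move=> /tleP [[|n] <-]; [left | right; rewrite iterSr tle_iter]. Qed.

Lemma tle_chain u v w : tle u v -> tle u w -> tle v w || tle w v.
Proof.
move=> /tleP [n <-] /tleP [m <-]; case: (leqP n m) => [nm|/ltnW mn].
  by rewrite -(subnK nm) iterD tle_iter.
by rewrite -(subnK mn) iterD tle_iter orbT.
Qed.

Lemma par_neq_self u v : tle u v -> u != v -> par u != u.
Proof. by move=> /tleP [n <-] Nu; apply/eqP => pu; rewrite iter_fix ?eqxx in Nu. Qed.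

Lemma tadj_sym : symmetric (tadj par).
Proof. by move=> a b; rewrite /tadj eq_sym orbC. Qed.

Lemma tadj_exit u a b : tle a u -> ~~ tle b u -> tadj par a b -> b = par u.
Proof.
move=> au Nbu /andP [_ /orP [/eqP ab|/eqP ba]].
  by case: (tle_parl au) => [<- //|]; rewrite ab (negbTE Nbu).
by rewrite -ba in au; rewrite (tle_trans (tle_par b) au) in Nbu.
Qed.

Definition tinterval u v := [set t | tle u t && tle t v].

Lemma card_tinterval_ltr u s v :
  tle u s -> tle s v -> s != v -> #|tinterval u s| < #|tinterval u v|.
Proof.
move=> us sv Nsv; apply: proper_card; rewrite properE; apply/andP; split.
  by apply/subsetP => t; rewrite !inE => /andP [-> /tle_trans ->].
apply/subsetPn; exists v; first by rewrite inE (tle_trans us sv) tle_refl.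
by rewrite inE negb_and; apply/orP; right; apply: contra_neqN Nsv => /(tle_anti sv).
Qed.

Lemma card_tinterval_ltl u s v :
  tle u s -> tle s v -> s != u -> #|tinterval s v| < #|tinterval u v|.
Proof.
move=> us sv Nsu; apply: proper_card; rewrite properE; apply/andP; split.
  by apply/subsetP => t; rewrite !inE => /andP [/(tle_trans us) -> ->].
apply/subsetPn; exists u; first by rewrite inE (tle_trans us sv) tle_refl.
by rewrite inE negb_and; apply/orP; left; apply: contra_neqN Nsu => /(tle_anti us) ->.
Qed.

Definition ornament_at v (A : {set V}) : Prop :=
  [/\ v \in A, {in A, forall u, tle u v} & {in A, forall u, u != v -> par u \in A}].

Notation induced_adj A := (fun a b => [&& a \in A, b \in A & tadj par a b]).

Lemma ornament_at_convex v A u t :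
  ornament_at v A -> u \in A -> tle u t -> tle t v -> t \in A.
Proof.
case=> vA _ Apar uA /tleP [n <-]; elim: n u uA => // n IH u uA.
rewrite iterSr; have [-> tv|Nuv] := eqVneq u v; last exact: IH (Apar u uA Nuv).
by rewrite (tle_anti tv (tle_trans (tle_par v) (tle_iter n _))).
Qed.

Lemma ornament_at_connect v A x :
  ornament_at v A -> x \in A -> connect (induced_adj A) x v.
Proof.
case=> _ Av Apar xA; have [n xv] := tleP (Av x xA).
elim: n x xA xv => [|n IH] x xA xv; first by rewrite -xv connect0.
have [->|Nxv] := eqVneq x v; first exact: connect0.
apply: (connect_trans (y := par x)); last by apply: IH; rewrite ?Apar // -iterSr.
apply: connect1; rewrite xA Apar //= /tadj eqxx orTb andbT eq_sym.
exact: par_neq_self (Av x xA) Nxv.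
Qed.

Lemma exists_tmaximal_above (A : {set V}) u :
  u \in A -> exists2 w, tmaximal par A w & tle u w.
Proof.
move=> uA; have uu : (u \in A) && tle u u by rewrite uA tle_refl.
case: (@arg_maxnP _ u (fun w => (w \in A) && tle u w) (fun w => #|tinterval u w|) uu).
move=> w /andP [wA uw] wmax.
exists w => //; split=> // y yA wy; apply/eqP; apply: contraT => Nyw.
have := wmax y; rewrite yA (tle_trans uw wy) => /(_ isT) /=.
by rewrite leqNgt card_tinterval_ltr // eq_sym.
Qed.

Lemma ornament_atP v A :
  ornament par A /\ (forall x, tmaximal par A x <-> x = v) <-> ornament_at v A.
Proof.
split=> [[[_ connA] maxA]|oA].
  have [vA _] := (maxA v).2 erefl.
  have Av : {in A, forall u, tle u v}.
    by move=> u /exists_tmaximal_above [w /maxA <-].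
  split=> // u uA Nuv.
  have Nvu : ~~ tle v u.
    by apply/negP => vu; rewrite (tle_anti (Av u uA) vu) eqxx in Nuv.
  have [a [b [au Nbu /and3P [_ bA ab]]]] :=
    connect_exit (P := tle^~ u) (connA u v uA vA) (tle_refl u) Nvu.
  by rewrite -(tadj_exit au Nbu ab).
have [vA Av _] := oA.
have adj_sym : connect_sym (induced_adj A).
  by apply: sym_connect_sym => a b; rewrite /= tadj_sym andbCA.
split; [split|] => [|x y xA yA|x].
- by apply/set0Pn; exists v.
- apply: connect_trans (ornament_at_connect oA xA) _.
  by rewrite adj_sym; apply: ornament_at_connect.
split=> [[xA xmax]|->]; first by rewrite (xmax v vA (Av x xA)).
by split=> // y yA /(tle_anti (Av y yA)).
Qed.

Definition mem_orn (d : V -> {set V}) : rel V := fun u v => u \in d v.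

Definition ornamental (d : V -> {set V}) : Prop :=
  (forall v, ornament_at v (d v)) /\ transitive (mem_orn d).

Lemma ornamentalP d : ornamentation par d <-> ornamental d.
Proof.
split=> [[ornd [maxd nested]]|[od dtrans]].
  have od v : ornament_at v (d v) by apply/ornament_atP; split; [apply: ornd | apply: maxd].
  split=> // w u v uw wv.
  have [ww Aw _] := od w; have [vv Av _] := od v.
  case: (nested w v) => [/subsetP|[/subsetP|/disjointFr dj]]; first exact.
    by move=> /(_ v vv) vw; rewrite /mem_orn (tle_anti (Aw v vw) (Av w wv)).
  by rewrite /mem_orn dj in wv.
split; [|split] => [v|v x|v v']; try by case/ornament_atP: (od v).
case: (pickP (fun u => (u \in d v) && (u \in d v'))) => [u /andP [uv uv']|none].
  have [_ Av _] := od v; have [_ Av' _] := od v'.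
  case/orP: (tle_chain (Av u uv) (Av' u uv')) => [vv'|v'v]; [left|right; left].
    apply/subsetP => x xv; apply: dtrans xv _.
    exact: ornament_at_convex (od v') uv' (Av u uv) vv'.
  apply/subsetP => x xv; apply: dtrans xv _.
  exact: ornament_at_convex (od v) uv (Av' u uv') v'v.
by right; right; apply/pred0P.
Qed.

Definition orn_meet (x y : V -> {set V}) : V -> {set V} := fun v => x v :&: y v.

Definition orn_join (x y : V -> {set V}) : V -> {set V} :=
  fun v => [set u | connect (relU (mem_orn x) (mem_orn y)) u v].

Lemma ornamental_meet x y : ornamental x -> ornamental y -> ornamental (orn_meet x y).
Proof.
case=> ox tx [oy ty]; split=> [v|w u v]; last first.
  rewrite /mem_orn !inE => /andP [ux uy] /andP [xv yv].
  by apply/andP; split; [apply: tx xv | apply: ty yv].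
have [vx Ax Px] := ox v; have [vy Ay Py] := oy v.
split=> [|u|u]; rewrite !inE ?vx ?vy // => /andP [ux uy]; first exact: Ax.
by move=> Nuv; rewrite Px ?Py.
Qed.

Lemma ornamental_join x y : ornamental x -> ornamental y -> ornamental (orn_join x y).
Proof.
case=> ox _ [oy _]; split=> [v|w u v]; last by rewrite /mem_orn !inE; apply: connect_trans.
have below : subrel (relU (mem_orn x) (mem_orn y)) tle.
  by move=> a b /orP [] ab; [case: (ox b) => _ -> | case: (oy b) => _ ->].
split=> [|u|u]; rewrite !inE; first exact: connect0.
  exact: (connect_sub_preorder tle_refl tle_trans below).
move=> uv Nuv; have [t [Ntu /orP [] ut tv]] := connect_neq_step uv Nuv.
  apply: connect_trans tv; apply: connect1.
  by case: (ox t) => _ _ Px; apply/orP; left; apply: Px ut _; rewrite eq_sym.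
apply: connect_trans tv; apply: connect1.
by case: (oy t) => _ _ Py; apply/orP; right; apply: Py ut _; rewrite eq_sym.
Qed.

Lemma orn_meet_lbl x y : ole (orn_meet x y) x.
Proof. by move=> v; apply: subsetIl. Qed.

Lemma orn_meet_lbr x y : ole (orn_meet x y) y.
Proof. by move=> v; apply: subsetIr. Qed.

Lemma orn_meet_greatest x y w : ole w x -> ole w y -> ole w (orn_meet x y).
Proof. by move=> wx wy v; rewrite subsetI wx wy. Qed.

Lemma orn_join_ubl x y : ole x (orn_join x y).
Proof. by move=> v; apply/subsetP => u xu; rewrite inE connect1 //; apply/orP; left. Qed.

Lemma orn_join_ubr x y : ole y (orn_join x y).
Proof. by move=> v; apply/subsetP => u yu; rewrite inE connect1 //; apply/orP; right. Qed.

Lemma orn_join_least x y w :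
  ornamental w -> ole x w -> ole y w -> ole (orn_join x y) w.
Proof.
case=> ow tw xw yw v; apply/subsetP => u; rewrite inE.
apply: (connect_sub_preorder (R := mem_orn w)) => // [a|a b /orP [] ab].
- by case: (ow a).
- exact: (subsetP (xw b)).
- exact: (subsetP (yw b)).
Qed.

Lemma is_meetP x y m : ornamental x -> ornamental y -> ornamental m ->
  is_meet par x y m <-> m =1 orn_meet x y.
Proof.
move=> ox oy om; split=> [[_ [mx [my mmax]]] v|m_eq].
  apply/eqP; rewrite eqEsubset subsetI mx my /=.
  apply: (mmax (orn_meet x y)); last exact: orn_meet_lbr.
    exact/ornamentalP/ornamental_meet.
  exact: orn_meet_lbl.
split; first exact/ornamentalP.
split; [|split] => [v|v|w _ wx wy v]; rewrite m_eq.
- exact: orn_meet_lbl x y v.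
- exact: orn_meet_lbr x y v.
- exact: orn_meet_greatest wx wy v.
Qed.

Lemma is_joinP x y j : ornamental x -> ornamental y -> ornamental j ->
  is_join par x y j <-> j =1 orn_join x y.
Proof.
move=> ox oy oj; split=> [[_ [xj [yj jmin]]] v|j_eq].
  apply/eqP; rewrite eqEsubset orn_join_least // andbT.
  apply: (jmin (orn_join x y)); last exact: orn_join_ubr.
    exact/ornamentalP/ornamental_join.
  exact: orn_join_ubl.
split; first exact/ornamentalP.
split; [|split] => [v|v|w /ornamentalP ow xw yw v]; rewrite j_eq.
- exact: orn_join_ubl x y v.
- exact: orn_join_ubr x y v.
- exact: orn_join_least ow xw yw v.
Qed.

Lemma orn_meet_join_sd z1 z2 a b :
  ornamental z1 -> ornamental z2 -> ornamental b ->
  a =1 orn_meet z1 b -> a =1 orn_meet z2 b -> a =1 orn_meet (orn_join z1 z2) b.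
Proof.
move=> o1 o2 [ob _] a1 a2 v; apply/eqP; rewrite eqEsubset {1}a1 setSI ?orn_join_ubl //=.
have [_ Bv _] := ob v.
have a_sub_b t : t \in a v -> t \in b v by rewrite a1 inE => /andP [].
(* R t s: once s is in a(v), so is every t of b(v) below s on a closure chain. *)
pose R := [rel t s | tle t s && ((s \in a v) ==> (t \in b v) ==> (t \in a v))].
have edge d : ornamental d -> a =1 orn_meet d b -> subrel (mem_orn d) R.
  move=> [od td] ad t s ts; have [_ Ds _] := od s.
  rewrite /= Ds //; apply/implyP => sa; apply/implyP => tb.
  by rewrite ad inE tb andbT; apply: td ts _; move: sa; rewrite ad inE => /andP [].
have R_trans : transitive R.
  move=> s t r /andP [ts /implyP sa] /andP [sr /implyP ra]; rewrite /= (tle_trans ts sr).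
  apply/implyP => rav; apply/implyP => tb.
  have sb : s \in b v.
    exact: ornament_at_convex (ob v) tb ts (tle_trans sr (Bv r (a_sub_b r rav))).
  exact: implyP (sa (implyP (ra rav) sb)) tb.
have R_refl : reflexive R by move=> t; rewrite /= tle_refl; apply/implyP => ->; rewrite implybT.
have va : v \in a v.
  by rewrite a1 inE; case: o1 => /(_ v) [-> _ _] _; case: (ob v).
apply/subsetP => u; rewrite !inE => /andP [uJ ub].
have /andP [_ /implyP uR] : R u v.
  apply: connect_sub_preorder R_refl R_trans _ _ _ uJ => t s /orP [].
    exact: edge o1 a1 t s.
  exact: edge o2 a2 t s.
exact: implyP (uR va) ub.
Qed.

Lemma orn_join_meet_sd x y a b :
  ornamental x -> ornamental y -> ornamental a -> ornamental b ->
  b =1 orn_join x a -> b =1 orn_join y a -> b =1 orn_join (orn_meet x y) a.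
Proof.
move=> ox oy oa ob bx by_ v; apply/eqP; rewrite eqEsubset andbC orn_join_least //=; last first.
- by move=> w; rewrite bx orn_join_ubr.
- by move=> w; apply: subset_trans (orn_meet_lbl x y w) _; rewrite bx orn_join_ubl.
set C := orn_join (orn_meet x y) a; apply/subsetP => u.
have [oC C_trans] : ornamental C by apply: ornamental_join (ornamental_meet ox oy) oa.
have [n] := ubnP #|tinterval u v|; elim: n u v => // n IH u v lt_n ub.
have C_or d : b =1 orn_join d a -> u \in C v \/ u \in d v.
  move=> bd; move: (ub); rewrite bd inE.
  case/connect_cases => [<-|/orP [ud|ua]|[s [Nsu Nsv us sv]]].
  - by left; case: (oC u).
  - by right.
  - by left; apply: (subsetP (orn_join_ubr _ _ v)).
  have usb : u \in b s by rewrite bd inE.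
  have svb : s \in b v by rewrite bd inE.
  have [[_ Bs _] [_ Bv _]] := (ob.1 s, ob.1 v).
  have le_us := Bs u usb; have le_sv := Bv s svb.
  left; apply: C_trans (IH u s _ usb) (IH s v _ svb).
    exact: leq_trans (card_tinterval_ltr le_us le_sv Nsv) lt_n.
  exact: leq_trans (card_tinterval_ltl le_us le_sv Nsu) lt_n.
case: (C_or x bx) (C_or y by_) => [//|ux] [//|uy].
by apply: (subsetP (orn_join_ubl _ _ v)); rewrite inE ux uy.
Qed.

Lemma ornamentation_lattice : orn_lattice par.
Proof.
move=> x y /ornamentalP ox /ornamentalP oy; split.
  by exists (orn_meet x y); apply/(is_meetP ox oy (ornamental_meet ox oy)).
by exists (orn_join x y); apply/(is_joinP ox oy (ornamental_join ox oy)).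
Qed.

Lemma ornamentation_meet_sd a b :
  ornamentation par a -> ornamentation par b -> ole a b ->
  exists zm, ornamentation par zm /\ is_meet par zm b a /\
    forall z, ornamentation par z -> is_meet par z b a -> ole z zm.
Proof.
move=> /ornamentalP oa /ornamentalP ob ab.
pose P z := ornamental z /\ a =1 orn_meet z b.
have [||||zm [ozm azm] zmax] := @ex_greatest_closed _ P orn_join.
- exact: orn_join_ubl.
- exact: orn_join_ubr.
- by move=> x y [ox ax] [oy ay]; split; [apply: ornamental_join | apply: orn_meet_join_sd].
- by exists a; split=> // v; apply/esym/setIidPl/ab.
exists zm; split; [exact/ornamentalP | split; first exact/(is_meetP ozm ob oa)].
by move=> z /ornamentalP oz /(is_meetP oz ob oa) az; apply: zmax.
Qed.

Lemma ornamentation_join_sd a b :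
  ornamentation par a -> ornamentation par b -> ole a b ->
  exists zm, ornamentation par zm /\ is_join par zm a b /\
    forall z, ornamentation par z -> is_join par z a b -> ole zm z.
Proof.
move=> /ornamentalP oa /ornamentalP ob ab.
pose P z := ornamental z /\ b =1 orn_join z a.
have [||||zm [ozm bzm] zmin] := @ex_least_closed _ P orn_meet.
- exact: orn_meet_lbl.
- exact: orn_meet_lbr.
- by move=> x y [ox bx] [oy by_]; split; [apply: ornamental_meet | apply: orn_join_meet_sd].
- exists b; split=> // v; apply/eqP; rewrite eqEsubset orn_join_ubl.
  exact: orn_join_least (fun=> subxx _) ab v.
exists zm; split; [exact/ornamentalP | split; first exact/(is_joinP ozm oa ob)].
by move=> z /ornamentalP oz /(is_joinP oz oa ob) bz; apply: zmin.
Qed.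

End Ornamentations.

Theorem theorem6p2 (V : finType) (root : V) (par : V -> V) :
  rooted_tree root par ->
  orn_lattice par /\ orn_semidistributive par.
Proof.
move=> tree; split; first exact: ornamentation_lattice tree.
move=> a b oa ob ab; split.
  exact: ornamentation_meet_sd tree a b oa ob ab.
exact: ornamentation_join_sd tree a b oa ob ab.
Qed.
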